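(* Let $n\geq 2$, $1\leq k\leq n-1$, $w=w_1\cdots w_n\in\mathfrak{S}_n$, and let the section $w_i\cdots w_j$ be $k$-ascending. (1) If there is $t>j$ with $w_j<w_t$ and there is no $k$-down in $w_j\cdots w_t$, then there is $t'$ with $j<t'\leq t$ such that $w_i\cdots w_j\cdots w_{t'}$ is $k$-ascending. (2) If there is $s<i$ with $w_s<w_i$ and there is no $k$-down in $w_s\cdots w_i$, then there is $s'$ with $s\leq s'<i$ such that $w_{s'}\cdots w_i\cdots w_j$ is $k$-ascending.
   Context: $\mathfrak{S}_n$ is the set of permutations $w=w_1\cdots w_n$ of $\{1,\dots,n\}$. A section of $w$ is a consecutive block $w_sw_{s+1}\cdots w_t$ ($s\le t$). A section $w_s\cdots w_t$ is a $k$-up if $s<t$ and $w_t-w_s\geq k$, and a $k$-down if $s<t$ and $w_s-w_t\geq k$. A $k$-up (or $k$-down) ''in'' the section $w_a\cdots w_b$ means a $k$-up (or $k$-down) $w_s\cdots w_t$ with $a\leq s<t\leq b$. A section $w_i\cdots w_j$ with $i<j$ is $k$-ascending if: $w_i=\min\{w_i,\dots,w_j\}$ and $w_j=\max\{w_i,\dots,w_j\}$; $w_j-w_i\geq k$; and there is no $k$-down in $w_i\cdots w_j$. *)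

From mathcomp Require Import all_boot all_order all_fingroup.
Set Implicit Arguments. Unset Strict Implicit. Unset Printing Implicit Defensive.

(* A permutation w in S_n is w : 'S_n, positions are 'I_n (0-indexed: position
   p corresponds to w_{p+1}); values are val (w p) in {0,..,n-1}, i.e. the
   paper's values shifted by -1 (irrelevant: only differences/comparisons used). *)

Definition wv n (w : 'S_n) (p : 'I_n) : nat := val (w p).

Definition has_kdown_in n (w : 'S_n) (k : nat) (a b : 'I_n) : Prop :=
  exists s t : 'I_n, [/\ a <= s, s < t, t <= b & wv w t + k <= wv w s].

Definition k_ascending n (w : 'S_n) (k : nat) (i j : 'I_n) : Prop :=
  [/\ i < j,
      (forall p : 'I_n, i <= p <= j -> wv w i <= wv w p),
      (forall p : 'I_n, i <= p <= j -> wv w p <= wv w j),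
      wv w i + k <= wv w j
    & ~ has_kdown_in w k i j].

From mathcomp Require Import all_boot all_order all_fingroup.
From mathcomp Require Import zify.

(* Extending the section w_i..w_j to the right, take for t' a position of the
   maximum of w_j..w_t.  Then w_t' dominates w_j..w_t', hence w_i..w_t' too since
   w_j is the maximum of w_i..w_j; the absence of k-downs in w_j..w_t keeps every
   w_p with p > j above w_j - k >= w_i; and a k-down of w_i..w_t' straddling j
   could start at j instead, giving a k-down in w_j..w_t.  The extension to the
   left is the mirror image, with a position of the minimum of w_s..w_i. *)

Lemma exists_max_in {n : nat} (f : 'I_n -> nat) {a b : 'I_n} : a <= b ->
  exists2 m : 'I_n, a <= m <= b &
    forall p : 'I_n, a <= p <= b -> f p <= f m.
Proof.
move=> ab; have Pb : a <= b <= b by rewrite ab leqnn.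
case: (@arg_maxnP _ b (fun p : 'I_n => a <= p <= b) f Pb) => m Pm maxm.
by exists m.
Qed.

Lemma exists_min_in {n : nat} (f : 'I_n -> nat) {a b : 'I_n} : a <= b ->
  exists2 m : 'I_n, a <= m <= b &
    forall p : 'I_n, a <= p <= b -> f m <= f p.
Proof.
move=> ab; have Pa : a <= a <= b by rewrite ab leqnn.
case: (@arg_minnP _ a (fun p : 'I_n => a <= p <= b) f Pa) => m Pm minm.
by exists m.
Qed.

Section KAscending.

Context {n k : nat} {w : 'S_n}.

Lemma has_kdown_in_widen {a b a' b' : 'I_n} :
  a <= a' -> b' <= b -> has_kdown_in w k a' b' -> has_kdown_in w k a b.
Proof.
move=> aa' b'b [s [t [a's st tb' kdown]]].
by exists s, t; split=> //; lia.
Qed.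

Lemma no_kdown_in_lower (a b p : 'I_n) :
  ~ has_kdown_in w k a b -> a < p <= b -> wv w a < wv w p + k.
Proof.
move=> nokd /andP[ap pb]; rewrite ltnNge; apply/negP => kdown.
by apply: nokd; exists a, p; split.
Qed.

Lemma no_kdown_in_upper (a b p : 'I_n) :
  ~ has_kdown_in w k a b -> a <= p < b -> wv w p < wv w b + k.
Proof.
move=> nokd /andP[ap pb]; rewrite ltnNge; apply/negP => kdown.
by apply: nokd; exists p, b; split.
Qed.

Lemma no_kdown_in_cat_max (a b c : 'I_n) :
  (forall p : 'I_n, a <= p <= b -> wv w p <= wv w b) ->
  ~ has_kdown_in w k a b -> ~ has_kdown_in w k b c -> ~ has_kdown_in w k a c.
Proof.
move=> maxb nokd_ab nokd_bc [s [t [as_ st tc kdown]]].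
have [tb | bt] := leqP t b; first by apply: nokd_ab; exists s, t.
have [bs | sb] := leqP b s; first by apply: nokd_bc; exists s, t; split.
have := maxb s; rewrite as_ (ltnW sb) => /(_ isT) sleb.
by apply: nokd_bc; exists b, t; split=> //; lia.
Qed.

Lemma no_kdown_in_cat_min (a b c : 'I_n) :
  (forall p : 'I_n, b <= p <= c -> wv w b <= wv w p) ->
  ~ has_kdown_in w k a b -> ~ has_kdown_in w k b c -> ~ has_kdown_in w k a c.
Proof.
move=> minb nokd_ab nokd_bc [s [t [as_ st tc kdown]]].
have [bs | sb] := leqP b s; first by apply: nokd_bc; exists s, t.
have [tb | bt] := leqP t b; first by apply: nokd_ab; exists s, t; split.
have := minb t; rewrite (ltnW bt) tc => /(_ isT) blet.
by apply: nokd_ab; exists s, b; split=> //; lia.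
Qed.

Lemma k_ascending_extend_right (i j t : 'I_n) :
  k_ascending w k i j -> j < t ->
  (forall p : 'I_n, j <= p <= t -> wv w p <= wv w t) ->
  ~ has_kdown_in w k j t -> k_ascending w k i t.
Proof.
move=> [ij mini maxj ik nokd_ij] jt maxt nokd_jt.
have wjt : wv w j <= wv w t by apply: maxt; rewrite leqnn ltnW.
split.
- exact: ltn_trans jt.
- move=> p /andP[ip pt]; have [pj | jp] := leqP p j; first by apply: mini; lia.
  have := @no_kdown_in_lower j t p nokd_jt; rewrite jp pt => /(_ isT); lia.
- move=> p /andP[ip pt]; have [pj | jp] := leqP p j.
    by have := maxj p; rewrite ip pj => /(_ isT); lia.
  by apply: maxt; rewrite (ltnW jp).
- lia.
- apply: no_kdown_in_cat_max nokd_ij nokd_jt => p /andP[ip pj].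
  by apply: maxj; rewrite ip pj.
Qed.

Lemma k_ascending_extend_left (s i j : 'I_n) :
  k_ascending w k i j -> s < i ->
  (forall p : 'I_n, s <= p <= i -> wv w s <= wv w p) ->
  ~ has_kdown_in w k s i -> k_ascending w k s j.
Proof.
move=> [ij mini maxj ik nokd_ij] si mins nokd_si.
have wsi : wv w s <= wv w i by apply: mins; rewrite leqnn ltnW.
split.
- exact: ltn_trans ij.
- move=> p /andP[sp pj]; have [ip | pi] := leqP i p.
    by have := mini p; rewrite ip pj => /(_ isT); lia.
  by apply: mins; rewrite sp (ltnW pi).
- move=> p /andP[sp pj]; have [ip | pi] := leqP i p; first by apply: maxj; lia.
  have := @no_kdown_in_upper s i p nokd_si; rewrite sp pi => /(_ isT); lia.
- lia.
- apply: no_kdown_in_cat_min nokd_si nokd_ij => p /andP[ip pj].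
  by apply: mini; rewrite ip pj.
Qed.

End KAscending.

Theorem lemma2p4 (n : nat) (k : nat) (w : 'S_n) (i j : 'I_n) :
  2 <= n -> 1 <= k <= n - 1 ->
  k_ascending w k i j ->
  (forall t : 'I_n, j < t -> wv w j < wv w t -> ~ has_kdown_in w k j t ->
     exists t' : 'I_n, j < t' <= t /\ k_ascending w k i t') /\
  (forall s : 'I_n, s < i -> wv w s < wv w i -> ~ has_kdown_in w k s i ->
     exists s' : 'I_n, s <= s' < i /\ k_ascending w k s' j).
Proof.
move=> _ _ asc_ij; split.
- move=> t jt wjt nokd_jt.
  have [t' /andP[jt' t't] maxt'] := exists_max_in (wv w) (ltnW jt).
  have jt'_lt : j < t'.
    rewrite ltn_neqAle jt' andbT; apply/eqP => /val_inj eq_jt'.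
    by have := maxt' t; rewrite (ltnW jt) leqnn -eq_jt' => /(_ isT); lia.
  exists t'; split; first by rewrite jt'_lt.
  apply: k_ascending_extend_right asc_ij jt'_lt _ _.
  + by move=> p /andP[jp pt']; apply: maxt'; rewrite jp (leq_trans pt').
  + by move/(has_kdown_in_widen (leqnn j) t't).
- move=> s si wsi nokd_si.
  have [s' /andP[ss' s'i] mins'] := exists_min_in (wv w) (ltnW si).
  have s'i_lt : s' < i.
    rewrite ltn_neqAle s'i andbT; apply/eqP => /val_inj eq_s'i.
    by have := mins' s; rewrite (ltnW si) leqnn eq_s'i => /(_ isT); lia.
  exists s'; split; first by rewrite ss' s'i_lt.
  apply: k_ascending_extend_left asc_ij s'i_lt _ _.
  + by move=> p /andP[s'p pi]; apply: mins'; rewrite pi (leq_trans ss').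
  + by move/(has_kdown_in_widen ss' (leqnn i)).
Qed.
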